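(* Let $i\in\mathbb{N}$ and $f\in\mathbb{R}^n\setminus\mathbb{Z}^n$. Then $\mathcal{L}_i^n$ is $f$-closed.
   Context: $\mathcal{C}^n$ is the family of all $n$-dimensional closed convex subsets of $\mathbb{R}^n$; $\mathcal{C}^n_f$ is the subfamily of sets containing $f$ in the interior, and for $\mathcal{B}\subseteq\mathcal{C}^n$, $\mathcal{B}_f=\mathcal{B}\cap\mathcal{C}^n_f$. A set $B$ is lattice-free if $B\in\mathcal{C}^n$ and $\operatorname{int}(B)\cap\mathbb{Z}^n=\emptyset$. $\mathcal{L}_i^n$ is the family of all lattice-free polyhedra in $\mathbb{R}^n$ with at most $i$ facets. For $B\in\mathcal{C}^n$ with $0\in\operatorname{int}(B)$, $\psi_B(r)=\inf\{\lambda>0:r\in\lambda B\}$. A family $\mathcal{B}\subseteq\mathcal{C}^n$ is $f$-closed if whenever $B_t\in\mathcal{B}_f$ ($t\in\mathbb{N}$), $C\in\mathcal{C}^n_f$ and $\psi_{B_t-f}\to\psi_{C-f}$ pointwise on $\mathbb{R}^n$, then $C\in\mathcal{B}_f$. *)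

From HB Require Import structures.
From mathcomp Require Import all_boot all_order all_algebra.
From mathcomp Require Import all_classical all_reals all_analysis.
Set Implicit Arguments. Unset Strict Implicit. Unset Printing Implicit Defensive.
Import Order.TTheory GRing.Theory Num.Theory.
Import numFieldNormedType.Exports.
Local Open Scope classical_set_scope.
Local Open Scope ring_scope.

Definition convex_set (R : realType) (n : nat) (B : set 'rV[R]_n) : Prop :=
  forall x y, B x -> B y -> forall t : R, 0 <= t -> t <= 1 ->
    B (t *: x + (1 - t) *: y).

(* C^n : n-dimensional closed convex subsets of R^n
   (for a convex set, n-dimensional = nonempty interior). *)
Definition Cn (R : realType) (n : nat) (B : set 'rV[R]_n) : Prop :=
  closed B /\ convex_set B /\ (B^° !=set0).

Definition Cnf (R : realType) (n : nat) (f : 'rV[R]_n) (B : set 'rV[R]_n) : Prop :=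
  Cn B /\ B^° f.

Definition is_lattice_point (R : realType) (n : nat) (x : 'rV[R]_n) : Prop :=
  forall j : 'I_n, x 0 j \is a Num.int.

Definition lattice_free (R : realType) (n : nat) (B : set 'rV[R]_n) : Prop :=
  Cn B /\ (forall z, B^° z -> ~ is_lattice_point z).

Definition dotv (R : realType) (n : nat) (a x : 'rV[R]_n) : R :=
  \sum_(j < n) a 0 j * x 0 j.

(* polyhedron with at most i facets: (for full-dimensional polyhedra)
   an intersection of at most i closed halfspaces *)
Definition polyhedron_at_most_facets (R : realType) (n i : nat)
    (P : set 'rV[R]_n) : Prop :=
  exists k : nat, (k <= i)%N /\
  exists (A : 'I_k -> 'rV[R]_n) (b : 'I_k -> R),
    (forall j, A j != 0) /\ P = [set x | forall j, dotv (A j) x <= b j].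

Definition Lin (R : realType) (n i : nat) (P : set 'rV[R]_n) : Prop :=
  lattice_free P /\ polyhedron_at_most_facets i P.

Definition translate (R : realType) (n : nat) (B : set 'rV[R]_n) (f : 'rV[R]_n)
  : set 'rV[R]_n := [set x - f | x in B].

Definition gauge (R : realType) (n : nat) (K : set 'rV[R]_n) (r : 'rV[R]_n) : R :=
  inf [set l : R | 0 < l /\ exists k, K k /\ r = l *: k].

Definition f_closed (R : realType) (n : nat) (Bf : set 'rV[R]_n -> Prop)
    (f : 'rV[R]_n) : Prop :=
  forall (Bt : nat -> set 'rV[R]_n) (C : set 'rV[R]_n),
    (forall t, Bf (Bt t) /\ Cnf f (Bt t)) ->
    Cnf f C ->
    (forall r, (fun t => gauge (translate (Bt t) f) r) @ \oo -->
               gauge (translate C f) r) ->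
    Bf C /\ Cnf f C.

From Pilot Require Import Defs.
From mathcomp Require Import all_boot all_order all_algebra.
From mathcomp Require Import all_classical all_reals all_analysis.
From mathcomp Require Import lra.
Set Implicit Arguments. Unset Strict Implicit. Unset Printing Implicit Defensive.
Import Order.TTheory GRing.Theory Num.Theory.
Import numFieldNormedType.Exports.
Local Open Scope classical_set_scope.
Local Open Scope ring_scope.

(** Every polyhedron [B] with [f] in its interior can be written with at most
  [i] inequalities [a_j . (x - f) <= 1], and then its gauge about [f] is
  [r |-> max (0, max_j a_j . r)].  If these gauges converge pointwise, then
  evaluating at [+-e_k] bounds the normals [a_j], so along an ultrafilter they
  converge to some [p_j]; the limit gauge is then the gauge of the polyhedron
  defined by the [p_j], and a closed convex set is determined by its gauge, so
  [C] is that polyhedron.  A lattice point in the interior of [C] has gauge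
  [< 1], hence lies in the interior of some [B_t], which is impossible. *)

Section Dotv.
Variables (R : realType) (n : nat).
Implicit Types u v x y : 'rV[R]_n.

Lemma dotvZl (c : R) u v : dotv (c *: u) v = c * dotv u v.
Proof. by rewrite /dotv mulr_sumr; apply: eq_bigr => k _; rewrite mxE mulrA. Qed.

Lemma dotvZr (c : R) u v : dotv u (c *: v) = c * dotv u v.
Proof. by rewrite /dotv mulr_sumr; apply: eq_bigr => k _; rewrite mxE mulrCA. Qed.

Lemma dotvDr u x y : dotv u (x + y) = dotv u x + dotv u y.
Proof. by rewrite /dotv -big_split; apply: eq_bigr => k _; rewrite mxE mulrDr. Qed.

Lemma dotvNr u x : dotv u (- x) = - dotv u x.
Proof. by rewrite /dotv -sumrN; apply: eq_bigr => k _; rewrite mxE mulrN. Qed.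

Lemma dotvBr u x y : dotv u (x - y) = dotv u x - dotv u y.
Proof. by rewrite /dotv -sumrB; apply: eq_bigr => k _; rewrite !mxE mulrBr. Qed.

Lemma dotv0l v : dotv 0 v = 0.
Proof. by rewrite /dotv big1 // => k _; rewrite mxE mul0r. Qed.

Lemma dotv_delta u k : dotv u (delta_mx 0 k) = u 0 k.
Proof.
rewrite /dotv (bigD1 k) //= mxE !eqxx mulr1 big1 ?addr0 // => j jk.
by rewrite mxE (negbTE jk) andbF mulr0.
Qed.

Lemma dotv_gt0 u : u != 0 -> 0 < dotv u u.
Proof.
move=> u0; have [k uk] : exists k, u 0 k != 0.
  apply/existsP; apply: contraNT u0 => /existsPn u0; apply/eqP/rowP => k.
  by rewrite mxE; apply/eqP; rewrite -[_ == _]negbK u0.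
rewrite /dotv (bigD1 k) //= ltr_pwDl //.
  by rewrite lt0r mulf_neq0 //= -expr2 sqr_ge0.
by apply: sumr_ge0 => j _; rewrite -expr2 sqr_ge0.
Qed.

Lemma cvg_dotv (T : Type) (F : set_system T) {FF : Filter F}
    (u w : T -> 'rV[R]_n) p q :
  u @ F --> p -> w @ F --> q -> (fun t => dotv (u t) (w t)) @ F --> dotv p q.
Proof.
move=> up wq; rewrite /dotv.
apply: (@cvg_big _ _ _ _ _ (@add_continuous R^o)) => // k _.
apply: cvgM; [exact: (cvg_comp _ _ up (@coord_continuous R 1 n 0 k p)) |
               exact: (cvg_comp _ _ wq (@coord_continuous R 1 n 0 k q))].
Qed.

End Dotv.

Section Gauge.
Variables (R : realType) (n : nat).
Implicit Types (C K P : set 'rV[R]_n) (f r v x z : 'rV[R]_n).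

Lemma translateE C f : translate C f = [set r | C (r + f)].
Proof.
apply/seteqP; split => r /=; first by move=> [x Cx <-]; rewrite subrK.
by move=> Cr; exists (r + f) => //; rewrite addrK.
Qed.

Lemma interior_shift P z v : P^° z -> exists2 c : R, 0 < c & P (z + c *: v).
Proof.
move=> Pz; have zv : (fun m : nat => z + (harmonic m : R) *: v) @ \oo --> z.
  rewrite -[X in _ --> X]addr0 -(scale0r v).
  by apply: cvgD; [exact: cvg_cst | apply: cvgZ; [exact: cvg_harmonic | exact: cvg_cst]].
have near_z : \forall m \near \oo, P (z + (harmonic m : R) *: v) := zv P Pz.
have [m Pm] := filter_ex near_z.
by exists (harmonic m : R) => //; rewrite /harmonic /= invr_gt0 ltr0Sn.
Qed.

Lemma gauge_le1 K r : K r -> gauge K r <= 1.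
Proof.
move=> Kr; apply: ge_inf; first by exists 0 => l [/ltW].
by split => //; exists r; rewrite scale1r.
Qed.

(* Every point of the open segment from [f] to [x] lies in [C] because [x - f]
   is in [l *: (C - f)] with [l] arbitrarily close to the gauge; closedness
   then adds [x]. *)
Lemma mem_of_gauge_le1 C f x : closed C -> Defs.convex_set C -> C^° f ->
  gauge (translate C f) (x - f) <= 1 -> C x.
Proof.
move=> Ccl Ccv Cf g1; have fC : C f by apply: interior_subset.
have Sne : [set l : R | 0 < l /\ exists k, translate C f k /\ x - f = l *: k] !=set0.
  have [c c0 Cc] := interior_shift (x - f) Cf.
  exists c^-1; split; first by rewrite invr_gt0.
  exists (c *: (x - f)); split; last by rewrite scalerA mulVf ?scale1r // gt_eqF.
  by rewrite translateE /= addrC.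
have segment t : 0 <= t -> t < 1 -> C (f + t *: (x - f)).
  move=> t0 t1; have [->|tn0] := eqVneq t 0; first by rewrite scale0r addr0.
  have tp : 0 < t by rewrite lt_neqAle eq_sym tn0.
  have : gauge (translate C f) (x - f) < t^-1 by apply: le_lt_trans g1 _; rewrite invf_gt1.
  move=> /(inf_lt Sne) [l [l0 [k [+ ->]]] lt]; rewrite translateE /= => Ck.
  have tl0 : 0 <= t * l by rewrite mulr_ge0 // ltW.
  have tl1 : t * l <= 1 by rewrite -(mulfV tn0) ler_pM2l // ltW.
  have := Ccv _ _ Ck fC _ tl0 tl1; congr C.
  by rewrite scalerA scalerDr scalerBl scale1r addrCA addrK addrC.
pose y (m : nat) := f + (1 - (harmonic m : R)) *: (x - f).
apply: (@closed_cvg _ _ \oo _ y) => //.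
  apply: filterE => m; apply: segment.
    by rewrite subr_ge0 /harmonic /= invf_le1 ?ltr0Sn // -[1]/(1%:R) ler_nat.
  by rewrite ltrBlDr ltrDl /harmonic /= invr_gt0 ltr0Sn.
have -> : x = f + (1 - 0) *: (x - f) by rewrite subr0 scale1r addrC subrK.
apply: cvgD; first exact: cvg_cst.
apply: cvgZ; last exact: cvg_cst.
by apply: cvgB; [exact: cvg_cst | exact: cvg_harmonic].
Qed.

End Gauge.

Definition maxdot (R : realType) (n i : nat) (a : 'I_i -> 'rV[R]_n) (r : 'rV[R]_n) : R :=
  \big[Order.max/0]_(j < i) dotv (a j) r.

Definition normal_polyhedron (R : realType) (n i : nat) (f : 'rV[R]_n)
    (a : 'I_i -> 'rV[R]_n) : set 'rV[R]_n :=
  [set x | forall j, dotv (a j) (x - f) <= 1].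

Section NormalPolyhedron.
Variables (R : realType) (n i : nat).
Implicit Types (a : 'I_i -> 'rV[R]_n) (f r x z : 'rV[R]_n).

Lemma le_maxdot a r j : dotv (a j) r <= maxdot a r.
Proof. exact: le_bigmax. Qed.

Lemma normal_polyhedronP f a x :
  normal_polyhedron f a x <-> maxdot a (x - f) <= 1.
Proof.
split=> [ax|ax j]; first exact: bigmax_le.
exact: le_trans (le_maxdot a _ j) ax.
Qed.

Lemma gauge_normal_polyhedron f a r :
  gauge (translate (normal_polyhedron f a) f) r = maxdot a r.
Proof.
rewrite /gauge; set S := [set l : R | _].
have maxdot_ge0 : 0 <= maxdot a r by exact: bigmax_ge_id.
have SE l : S l <-> 0 < l /\ maxdot a r <= l.
  rewrite /S translateE /=; split.
    move=> [l0 [k [ak ->]]]; split => //; apply: bigmax_le => [|j]; first exact: ltW.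
    by rewrite dotvZr -[leRHS]mulr1 ler_pM2l // -[k](addrK f) ak.
  move=> [l0 al]; split => //; exists (l^-1 *: r); split.
    move=> j; rewrite addrK dotvZr mulrC -ler_pdivlMr ?invr_gt0 // invrK mul1r.
    exact: le_trans (le_maxdot a r j) al.
  by rewrite scalerA mulfV ?scale1r // gt_eqF.
apply/le_anti/andP; split.
  apply/ler_addgt0Pr => e e0; apply: ge_inf; first by exists 0 => l /SE [/ltW].
  by apply/SE; rewrite lerDl ltW // ltr_pwDr.
apply: lb_le_inf; last by move=> l /SE [].
by exists (maxdot a r + 1); apply/SE; rewrite lerDl ler01 ltr_pwDr.
Qed.

Lemma cvg_maxdot (T : Type) (F : set_system T) {FF : Filter F}
    (a_ : T -> 'I_i -> 'rV[R]_n) (r_ : T -> 'rV[R]_n) a r :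
  (forall j, a_ ^~ j @ F --> a j) -> r_ @ F --> r ->
  (fun t => maxdot (a_ t) (r_ t)) @ F --> maxdot a r.
Proof.
move=> aj rr; apply: (@cvg_big _ _ _ _ _ (@max_continuous _ R)) => // j _.
exact: cvg_dotv.
Qed.

Lemma maxdot_lt1_interior f a z :
  maxdot a (z - f) < 1 -> (normal_polyhedron f a)^° z.
Proof.
move=> az; have cvg_z : (fun y => maxdot a (y - f)) @ z --> maxdot a (z - f).
  apply: (cvg_maxdot (FF := nbhs_filter z)) => [j|]; first exact: cvg_cst.
  by apply: cvgB; [exact: cvg_id | exact: cvg_cst].
by apply: filterS (cvgr_lt _ cvg_z 1 az) => y /ltW /normal_polyhedronP.
Qed.

Lemma interior_maxdot_lt1 f a z :
  (normal_polyhedron f a)^° z -> maxdot a (z - f) < 1.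
Proof.
move=> /(interior_shift (z - f)) [s s0 az]; apply: bigmax_lt => // j.
have := az j; rewrite addrAC -{1}(scale1r (z - f)) -scalerDl dotvZr => ajs.
nra.
Qed.

Lemma normal_polyhedron_facets f a :
  polyhedron_at_most_facets i (normal_polyhedron f a).
Proof.
pose s := [seq w <- map a (enum 'I_i) | w != 0].
have s_nz w : w \in s -> w != 0 by rewrite mem_filter => /andP [].
exists (size s); split.
  by rewrite size_filter (leq_trans (count_size _ _)) // size_map size_enum_ord.
exists (fun j => nth 0 s j), (fun j => 1 + dotv (nth 0 s j) f).
split=> [j|]; first by apply: s_nz; exact: mem_nth.
apply/seteqP; split => x /= ax j.
  rewrite -lerBlDr -dotvBr.
  have : nth 0 s j \in s by exact: mem_nth.
  by rewrite mem_filter => /andP [_ /mapP [j' _ ->]].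
have [aj0|aj0] := eqVneq (a j) 0; first by rewrite aj0 dotv0l ler01.
have ajs : a j \in s by rewrite mem_filter aj0 /= map_f // mem_enum.
have im : (index (a j) s < size s)%N by rewrite index_mem.
by have := ax (Ordinal im); rewrite /= nth_index // dotvBr lerBlDr.
Qed.

Lemma normalize_halfspace (u : 'rV[R]_n) (b : R) f x : dotv u f < b ->
  (dotv ((b - dotv u f)^-1 *: u) (x - f) <= 1) = (dotv u x <= b).
Proof.
move=> uf; rewrite dotvZl dotvBr mulrC ler_pdivrMr ?subr_gt0 // mul1r.
by rewrite lerD2r.
Qed.

(* Each of the [k <= i] rows is rescaled so that [f] has slack [1]; the
   remaining rows, [nth 0] past the end, are the trivial constraint [0 <= 1]. *)
Lemma polyhedron_normal_form (P : set 'rV[R]_n) f :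
  polyhedron_at_most_facets i P -> P^° f ->
  exists a : 'I_i -> 'rV[R]_n, P = normal_polyhedron f a.
Proof.
move=> [k [ki [A [b [A0 PE]]]]] Pf.
have slack j : dotv (A j) f < b j.
  have [c c0] := interior_shift (A j) Pf.
  rewrite PE => /(_ j); rewrite dotvDr dotvZr; apply: lt_le_trans.
  by rewrite ltrDl mulr_gt0 // dotv_gt0.
pose s := [seq (b j - dotv (A j) f)^-1 *: A j | j <- enum 'I_k].
exists (fun j : 'I_i => nth 0 s j); rewrite PE; apply/seteqP; split => x /= Ax j.
  have [js|js] := ltnP j (size s); last by rewrite nth_default // dotv0l ler01.
  by move: (mem_nth 0 js) => /mapP [j' _ ->]; rewrite normalize_halfspace.
have := Ax (widen_ord ki j).
by rewrite /= (nth_map j) ?size_enum_ord // nth_ord_enum normalize_halfspace.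
Qed.

End NormalPolyhedron.

Lemma ultra_cvg_of_compact (T : Type) (U : set_system T) (V : topologicalType)
    (u : T -> V) (A : set V) :
  UltraFilter U -> compact A -> U (u @^-1` A) -> exists p : V, u @ U --> p.
Proof.
move=> UU Acp UA; have [p [_ clp]] := Acp (u @ U) _ UA.
exists p => N Np; have [//|UNc] := in_ultra_setVsetC (u @^-1` N) UU.
by have [x []] := clp (~` N) N UNc Np.
Qed.

Section MaxdotLimit.
Variables (R : realType) (n i : nat) (T : Type) (F : set_system T).
Variables (a : T -> 'I_i -> 'rV[R]_n) (g : 'rV[R]_n -> R).
Hypothesis cvg_a : forall r, (fun t => maxdot (a t) r) @ F --> g r.

Lemma near_maxdot_coord_bounded {FF : Filter F} :
  \forall t \near F, forall j k,
    - (g (- delta_mx 0 k) + 1) <= a t j 0 k <= g (delta_mx 0 k) + 1.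
Proof.
have near_lt r : \forall t \near F, maxdot (a t) r < g r + 1.
  by apply: (cvgr_lt _ (@cvg_a r)); rewrite ltrDl.
apply: filterS (filter_forall FF (fun k =>
  filterI (near_lt (delta_mx 0 k)) (near_lt (- delta_mx 0 k)))) => t ak j k.
have [/(le_lt_trans (le_maxdot _ _ j)) up /(le_lt_trans (le_maxdot _ _ j)) low] := ak k.
by rewrite dotvNr dotv_delta ltrNl in low; rewrite dotv_delta in up; rewrite !ltW.
Qed.

Lemma maxdot_limit {FF : ProperFilter F} :
  exists p : 'I_i -> 'rV[R]_n, forall r, g r = maxdot p r.
Proof.
have [U [UU FU]] := ultraFilterLemma FF.
have /choice [p ap] : forall j, exists q : 'rV[R]_n, a ^~ j @ U --> q.
  move=> j; apply: (@ultra_cvg_of_compact _ U _ _ [set w : 'rV[R]_n |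
    forall k, `[- (g (- delta_mx 0 k) + 1), g (delta_mx 0 k) + 1]%classic (w ord0 k)] UU).
    exact: (@rV_compact R n _ (fun k => @segment_compact R _ _)).
  apply: FU; apply: filterS near_maxdot_coord_bounded => t ab k /=.
  by rewrite in_itv; exact: ab.
exists p => r; have cvgU : (fun t => maxdot (a t) r) @ U --> g r.
  by move=> N /(@cvg_a r) /FU.
exact: (cvg_unique _ cvgU (cvg_maxdot ap (cvg_cst r))).
Qed.

End MaxdotLimit.

Lemma closed_convex_normal_polyhedron (R : realType) (n i : nat)
    (C : set 'rV[R]_n) f (p : 'I_i -> 'rV[R]_n) :
  closed C -> Defs.convex_set C -> C^° f ->
  (forall r, gauge (translate C f) r = maxdot p r) -> C = normal_polyhedron f p.
Proof.
move=> Ccl Ccv Cf gaugeC; apply/seteqP; split => x Cx.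
  apply/normal_polyhedronP; rewrite -gaugeC; apply: gauge_le1.
  by rewrite translateE /= subrK.
by apply: (mem_of_gauge_le1 Ccl Ccv Cf); rewrite gaugeC -normal_polyhedronP.
Qed.

Theorem proposition3p7 (R : realType) (n i : nat) (f : 'rV[R]_n) :
  ~ is_lattice_point f -> f_closed (@Lin R n i) f.
Proof.
move=> _ B C LB [CC Cf] gaugeB; split=> //; have [Ccl [Ccv _]] := CC.
have /choice [a Ba] : forall t, exists a : 'I_i -> 'rV[R]_n, B t = normal_polyhedron f a.
  by move=> t; have [[_ Bt] [_ Bf]] := LB t; exact: polyhedron_normal_form.
have cvg_a r : (fun t => maxdot (a t) r) @ \oo --> gauge (translate C f) r.
  by under eq_fun => t do rewrite -(gauge_normal_polyhedron f) -Ba; exact: gaugeB.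
have [p gaugeC] := maxdot_limit cvg_a.
have CE := closed_convex_normal_polyhedron Ccl Ccv Cf gaugeC.
split; last by rewrite CE; exact: normal_polyhedron_facets.
split=> // z.
rewrite {1}CE => /interior_maxdot_lt1; rewrite -gaugeC.
move=> /(cvgr_lt _ (cvg_a (z - f)) 1) /filter_ex [t /maxdot_lt1_interior].
by rewrite -Ba; have [[[_ LBt] _] _] := LB t; exact: LBt.
Qed.
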